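(* Let $\sigma=(a_1,\ldots,a_s)$ be a partition of the positive integer $r\ge 2$ with $a_1\ge a_2\ge\cdots\ge a_s\ge 1$, let $n\ge s$ and $q\ge a_1$, and let $H=H(n,r,q\mid\sigma)$. Then the independence number of $H$ is \[\alpha(H)=\max\{(j-1)q+(a_j-1)(n-j+1)\;:\; j=1,\ldots,s\}.\]
   Context: A $\sigma$-hypergraph $H=H(n,r,q\mid\sigma)$, for a partition $\sigma=(a_1,\ldots,a_s)$ of $r$ with $s$ parts, is the $r$-uniform hypergraph whose vertex set is the disjoint union of $n$ classes $V_1,\ldots,V_n$, each of size $q$; an $r$-subset $K$ of vertices is an edge iff the multiset of non-zero values $|K\cap V_i|$ ($1\le i\le n$) equals $\sigma$. A vertex set is independent if it contains no edge; $\alpha(H)$ is the maximum size of an independent set. *)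

From mathcomp Require Import all_boot.
Set Implicit Arguments. Unset Strict Implicit. Unset Printing Implicit Defensive.

(* Vertex set of H(n,r,q|sigma): pairs (i, k) = k-th vertex of class V_i. *)
Definition vert (n q : nat) : finType := prod 'I_n 'I_q.

Definition vclass (n q : nat) (i : 'I_n) : {set vert n q} :=
  [set x : vert n q | x.1 == i].

Definition profile (n q : nat) (K : {set vert n q}) : seq nat :=
  [seq c <- [seq #|K :&: vclass q i| | i <- enum 'I_n] | 0 < c].

Definition sigma_edge (n r q : nat) (sigma : seq nat) (K : {set vert n q}) : bool :=
  (#|K| == r) && perm_eq (profile K) sigma.

Definition sigma_independent (n r q : nat) (sigma : seq nat) (S : {set vert n q}) : bool :=
  [forall K : {set vert n q}, (K \subset S) ==> ~~ sigma_edge r sigma K].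

Definition sigma_alpha (n r q : nat) (sigma : seq nat) : nat :=
  \max_(S : {set vert n q} | sigma_independent r sigma S) #|S|.

From mathcomp Require Import all_boot zify.

(* Write c_i = |S ∩ V_i|. The set S contains an edge iff, for every j, at
   least j classes satisfy c_i >= a_j: then classes for a_1, ..., a_s can be
   chosen greedily, all distinct; conversely an edge meets at least j classes
   in a_j or more vertices, since a_1 >= ... >= a_j. Hence an independent S
   has a level j at which at most j - 1 classes have c_i >= a_j, and then
   |S| <= (j - 1) q + (n - j + 1)(a_j - 1). Taking j - 1 full classes and
   a_j - 1 vertices of each remaining class attains this bound. *)

Set Implicit Arguments.
Unset Strict Implicit.
Unset Printing Implicit Defensive.

Lemma card_ord_ltn n j : j <= n -> #|[set i : 'I_n | i < j]| = j.
Proof.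
move=> jn; rewrite -sum1_card (eq_bigl (fun i : 'I_n => i < j)); last first.
  by move=> i; rewrite inE.
by rewrite (big_ord_narrow jn) sum1_card card_ord.
Qed.

Lemma card_take_enum (T : finType) (A : {set T}) e :
  e <= #|A| -> #|[set x in A | index x (enum A) < e]| = e.
Proof.
move=> eA.
have -> : [set x in A | index x (enum A) < e] = [set x in take e (enum A)].
  apply/setP => x; rewrite !inE; case xA: (x \in A) => /=.
    by rewrite in_take // mem_enum.
  by apply/esym/negbTE; apply: contraFN xA => /mem_take; rewrite mem_enum.
rewrite cardsE (card_uniqP _) ?take_uniq ?enum_uniq // size_take -cardE.
by case: ltngtP eA.
Qed.

Lemma sorted_geq_nth (s : seq nat) t j :
  sorted geq s -> t <= j -> j < size s -> nth 0 s j <= nth 0 s t.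
Proof.
move=> ss tj js.
have geq_trans : transitive geq by move=> a b c /[swap]; apply: leq_trans.
apply: (sorted_leq_nth geq_trans leqnn) => //.
by rewrite inE (leq_ltn_trans tj).
Qed.

Lemma count_sorted_geq_nth (s : seq nat) j :
  sorted geq s -> j < size s -> j < count (leq (nth 0 s j)) s.
Proof.
move=> ss js; rewrite -[X in count _ X](cat_take_drop j.+1 s) count_cat.
rewrite (leq_trans _ (leq_addr _ _)) //.
have : all (leq (nth 0 s j)) (take j.+1 s).
  apply/(all_nthP 0) => t; rewrite size_takel // => tj.
  by rewrite nth_take // sorted_geq_nth.
by rewrite all_count size_takel // => /eqP ->.
Qed.

Lemma greedy_transversal (T : finType) (A : nat -> {set T}) m :
  (forall j, j < m -> j < #|A j|) ->
  exists l : seq T,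
    [/\ uniq l, size l = m & {in l, forall x, x \in A (index x l)}].
Proof.
move=> bigA; elim: m bigA => [|m IH] bigA; first by exists [::].
have [l [ul sl lA]] := IH (fun j jm => bigA j (ltnW jm)).
have /subsetPn[x xA xl] : ~~ (A m \subset l).
  apply: contraTN (bigA m (ltnSn m)) => /subset_leq_card Am_le.
  by rewrite -leqNgt (leq_trans Am_le) // -sl card_size.
exists (rcons l x); split; first by rewrite rcons_uniq xl.
  by rewrite size_rcons sl.
move=> y; rewrite -cats1 index_cat mem_cat inE.
case: (boolP (y \in l)) => [yl _ | _ /eqP ->]; first exact: lA.
by rewrite /= eqxx addn0 sl.
Qed.

Lemma perm_placement (T : finType) (l : seq T) (s : seq nat) :
  uniq l -> size l = size s -> all (fun a => 0 < a) s ->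
  perm_eq [seq c <- [seq nth 0 s (index x l) | x <- enum T] | 0 < c] s.
Proof.
move=> ul sl s_pos; set f := fun x => nth 0 s (index x l).
have f_pos x : (0 < f x) = (x \in l).
  case: (boolP (x \in l)) => [xl | xNl].
    by apply: (all_nthP 0 s_pos); rewrite -sl index_mem.
  by rewrite /f memNindex // nth_default // sl.
have -> : s = map f l.
  apply: (@eq_from_nth _ 0); rewrite ?size_map // -sl => t tl.
  have x0 : T by case: l {ul sl f f_pos} tl => // x.
  by rewrite (nth_map x0) // /f index_uniq.
rewrite filter_map (eq_filter f_pos) perm_map // uniq_perm //.
  exact/filter_uniq/enum_uniq.
by move=> x; rewrite mem_filter mem_enum andbT.
Qed.

Section Classes.
Variables n q : nat.
Implicit Types S K : {set vert n q}.

Definition heavy_classes S a := [set i : 'I_n | a <= #|S :&: vclass q i|].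

Lemma card_vert_classes S : #|S| = \sum_(i < n) #|S :&: vclass q i|.
Proof.
rewrite -sum1_card (partition_big (fun x : vert n q => x.1) xpredT) //=.
by apply: eq_bigr => i _; rewrite -sum1_card; apply: eq_bigl => x; rewrite !inE.
Qed.

Lemma card_setI_vclass S i : #|S :&: vclass q i| = #|[set k | (i, k) \in S]|.
Proof.
rewrite -[RHS](card_imset _ (fun k k' (e : (i, k) = (i, k')) => congr1 snd e)).
apply: eq_card => -[i' k]; rewrite !inE /=.
apply/andP/imsetP => [[ikS /eqP ik] | [k' k'S [-> ->]]].
  by exists k; rewrite ?inE -?ik.
by rewrite inE in k'S.
Qed.

Lemma card_class_le S i : #|S :&: vclass q i| <= q.
Proof. by rewrite card_setI_vclass (leq_trans (max_card _)) ?card_ord. Qed.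

Lemma sumn_profile K : sumn (profile K) = #|K|.
Proof.
have sumn_pos (s : seq nat) : sumn [seq c <- s | 0 < c] = sumn s.
  by elim: s => //= -[|c] s /= ->.
by rewrite sumn_pos card_vert_classes sumnE big_map big_enum.
Qed.

Lemma count_profile_heavy K a :
  0 < a -> count (leq a) (profile K) = #|heavy_classes K a|.
Proof.
move=> a_pos; rewrite count_filter count_map -sum1_count -sum1_card.
rewrite big_enum_cond /=.
apply: eq_bigl => i; rewrite !inE /=.
by case: (leqP a) => // a_le; rewrite (leq_trans a_pos a_le).
Qed.

Lemma heavy_classesS K S a :
  K \subset S -> heavy_classes K a \subset heavy_classes S a.
Proof.
move=> KS; apply/subsetP => i; rewrite !inE => /leq_trans; apply.
by rewrite subset_leq_card // setSI.
Qed.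

Lemma exists_subset_class_cards S (f : 'I_n -> nat) :
  (forall i, f i <= #|S :&: vclass q i|) ->
  exists2 K : {set vert n q}, K \subset S & forall i, #|K :&: vclass q i| = f i.
Proof.
move=> fS.
exists [set x in S | index x (enum (S :&: vclass q x.1)) < f x.1].
  by apply/subsetP => x; rewrite inE => /andP[].
move=> i; rewrite -(card_take_enum (fS i)); apply: eq_card => x; rewrite !inE.
by case: eqP => [-> | _]; rewrite ?andbT ?andbF.
Qed.

Lemma card_le_heavy_classes S a j :
  #|heavy_classes S a| <= j -> j <= n -> a <= q.+1 ->
  #|S| <= j * q + (a - 1) * (n - j).
Proof.
move=> heavy_j jn aq; set A := heavy_classes S a in heavy_j *.
have heavy_sum : \sum_(i in A) #|S :&: vclass q i| <= #|A| * q.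
  by rewrite -sum_nat_const; apply: leq_sum => i _; apply: card_class_le.
have light_sum : \sum_(i | i \notin A) #|S :&: vclass q i| <= #|~: A| * (a - 1).
  rewrite -sum_nat_const (eq_bigl (fun i => i \in ~: A)); last first.
    by move=> i /=; rewrite in_setC.
  by apply: leq_sum => i; rewrite !inE -ltnNge; lia.
have cardA := cardsC A; rewrite card_ord in cardA.
rewrite card_vert_classes (bigID (mem A)) /=.
by rewrite (leq_trans (leq_add heavy_sum light_sum)) //; nia.
Qed.

Definition extremal_set j b : {set vert n q} :=
  [set x : vert n q | (x.1 < j) || (x.2 < b)].

Lemma card_extremal_set j b :
  j <= n -> b <= q -> #|extremal_set j b| = j * q + b * (n - j).
Proof.
move=> jn bq; set A := [set i : 'I_n | i < j].
have class_card i :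
    #|extremal_set j b :&: vclass q i| = if i \in A then q else b.
  rewrite card_setI_vclass inE; case: ifP => ij.
    by rewrite -[RHS]card_ord; apply: eq_card => k; rewrite !inE ij.
  by rewrite -[RHS](card_ord_ltn bq); apply: eq_card => k; rewrite !inE ij.
have cardA := cardsC A; rewrite card_ord card_ord_ltn // in cardA.
rewrite card_vert_classes (bigID (mem A)) /=.
rewrite (eq_bigr (fun=> q)); last by move=> i Ai; rewrite class_card Ai.
rewrite [X in _ + X](eq_bigr (fun=> b)); last first.
  by move=> i /negbTE Ai; rewrite class_card Ai.
rewrite [X in _ + X](eq_bigl (fun i => i \in ~: A)); last first.
  by move=> i /=; rewrite in_setC.
rewrite !sum_nat_const card_ord_ltn //; nia.
Qed.

Lemma heavy_extremal_set j b :
  j <= n -> b <= q -> #|heavy_classes (extremal_set j b) b.+1| <= j.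
Proof.
move=> jn bq; rewrite -[j in _ <= j](card_ord_ltn jn) subset_leq_card //.
apply/subsetP => i; rewrite !inE card_setI_vclass; apply: contraLR.
rewrite -!ltnNge ltnS => ij.
rewrite ltnS -[b in _ <= b](card_ord_ltn bq) subset_leq_card //.
by apply/subsetP => k; rewrite !inE ltnNge ij.
Qed.

Lemma sparse_level_independent r sigma S j :
  all (fun a => 0 < a) sigma -> sorted geq sigma -> j < size sigma ->
  #|heavy_classes S (nth 0 sigma j)| <= j -> sigma_independent r sigma S.
Proof.
move=> s_pos s_sorted js sparse; apply/forallP => K; apply/implyP => KS.
apply/negP => /andP[_ /permP/(_ (leq (nth 0 sigma j)))].
have a_pos : 0 < nth 0 sigma j by apply: (all_nthP 0 s_pos).
rewrite count_profile_heavy // => count_eq.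
have := count_sorted_geq_nth s_sorted js; rewrite -count_eq ltnNge.
by rewrite (leq_trans (subset_leq_card (heavy_classesS _ KS)) sparse).
Qed.

Lemma independent_sparse_level r sigma S :
  sumn sigma = r -> all (fun a => 0 < a) sigma -> sigma_independent r sigma S ->
  exists j : 'I_(size sigma), #|heavy_classes S (nth 0 sigma j)| <= j.
Proof.
move=> s_sum s_pos indep; apply/existsP.
apply: contraTT indep => /existsPn dense.
have dense_levels j : j < size sigma -> j < #|heavy_classes S (nth 0 sigma j)|.
  by move=> js; have := dense (Ordinal js); rewrite -ltnNge.
have [l [ul sl l_heavy]] := greedy_transversal dense_levels.
set f := fun i => nth 0 sigma (index i l).
have fS i : f i <= #|S :&: vclass q i|.
  case: (boolP (i \in l)) => [il | iNl].
    by have := l_heavy i il; rewrite inE.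
  by rewrite /f nth_default // memNindex // sl.
have [K KS K_classes] := exists_subset_class_cards fS.
have pK : perm_eq (profile K) sigma.
  by rewrite /profile (eq_map K_classes); apply: perm_placement.
apply/forallPn; exists K; rewrite KS negbK /sigma_edge pK andbT.
by rewrite -sumn_profile (perm_sumn pK) s_sum.
Qed.
End Classes.

Theorem corollary2p9 (r n q : nat) (sigma : seq nat) :
  2 <= r ->
  sumn sigma = r ->
  all (fun a => 0 < a) sigma ->
  sorted geq sigma ->
  size sigma <= n ->
  nth 0 sigma 0 <= q ->
  sigma_alpha n r q sigma =
    \max_(j < size sigma) (j * q + (nth 0 sigma j - 1) * (n - j)).
Proof.
move=> _ s_sum s_pos s_sorted sn a0q.
have level_le_q (j : 'I_(size sigma)) : nth 0 sigma j <= q.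
  exact: leq_trans (sorted_geq_nth s_sorted (leq0n j) (ltn_ord j)) a0q.
have jn (j : 'I_(size sigma)) : j <= n.
  exact: ltnW (leq_trans (ltn_ord j) sn).
apply/eqP; rewrite eqn_leq; apply/andP; split.
  apply/bigmax_leqP => S indep.
  have [j sparse] := independent_sparse_level s_sum s_pos indep.
  apply: leq_trans (leq_bigmax j).
  exact: card_le_heavy_classes sparse (jn j) (leqW (level_le_q j)).
apply/bigmax_leqP => j _.
have a_pos : 0 < nth 0 sigma j by apply: (all_nthP 0 s_pos).
have a_succ : nth 0 sigma j = (nth 0 sigma j - 1).+1 by rewrite subn1 prednK.
set b := nth 0 sigma j - 1 in a_succ *.
have bq : b <= q by apply: leq_trans (leq_subr 1 _) (level_le_q j).
rewrite -card_extremal_set //; apply: leq_bigmax_cond.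
apply: (sparse_level_independent _ s_pos s_sorted (ltn_ord j)).
by rewrite a_succ heavy_extremal_set.
Qed.
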